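(* Let $\omega_0,\alpha,\omega_d,h,H>0$, $J_0=\begin{bmatrix}0&\omega_0\\-\omega_0&0\end{bmatrix}$, $\tilde\Lambda=\begin{bmatrix}0&0\\0&-\frac{\alpha}{2}\end{bmatrix}$. Then the origin of the system on $\mathbb{R}\times\mathbb{R}^2\times\mathbb{R}$ $$\dot r=-hr+H\bar z^\top(J_0+\tilde\Lambda e^{\hat d})\bar z,\qquad \dot{\bar z}=(J_0+\tilde\Lambda)\bar z+(e^{\hat d}-1)\tilde\Lambda\bar z,\qquad \dot{\hat d}=-\omega_d(e^{\hat d}-1)$$ is globally uniformly asymptotically stable. *)

From Stdlib Require Import Reals Lra.
From Coquelicot Require Import Coquelicot.
Open Scope R_scope.

Definition qform (m11 m12 m21 m22 z1 z2 : R) : R :=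
  z1 * (m11 * z1 + m12 * z2) + z2 * (m21 * z1 + m22 * z2).

(* J0 = [[0, w0], [-w0, 0]],  Lt = [[0,0],[0,-a/2]]  (Lambda tilde). *)
Definition f_r (w0 a h H r z1 z2 d : R) : R :=
  - h * r + H * qform (0 + 0 * exp d) (w0 + 0 * exp d)
                      (- w0 + 0 * exp d) (0 + (- (a / 2)) * exp d) z1 z2.

(* (J0 + Lt) z + (e^d - 1) Lt z *)
Definition f_z1 (w0 a z1 z2 d : R) : R :=
  ((0 + 0) * z1 + (w0 + 0) * z2) + (exp d - 1) * (0 * z1 + 0 * z2).
Definition f_z2 (w0 a z1 z2 d : R) : R :=
  ((- w0 + 0) * z1 + (0 + (- (a / 2))) * z2)
  + (exp d - 1) * (0 * z1 + (- (a / 2)) * z2).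

Definition f_d (wd d : R) : R := - wd * (exp d - 1).

Record traj := mktraj { tr : R -> R; tz1 : R -> R; tz2 : R -> R; td : R -> R }.

Definition nrm (x : traj) (t : R) : R :=
  sqrt (tr x t ^ 2 + tz1 x t ^ 2 + tz2 x t ^ 2 + td x t ^ 2).

Definition is_solution (w0 a wd h H t0 : R) (x : traj) : Prop :=
  (forall t, t0 < t ->
     is_derive (tr x) t (f_r w0 a h H (tr x t) (tz1 x t) (tz2 x t) (td x t)) /\
     is_derive (tz1 x) t (f_z1 w0 a (tz1 x t) (tz2 x t) (td x t)) /\
     is_derive (tz2 x) t (f_z2 w0 a (tz1 x t) (tz2 x t) (td x t)) /\
     is_derive (td x) t (f_d wd (td x t))) /\
  filterlim (tr x) (at_right t0) (locally (tr x t0)) /\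
  filterlim (tz1 x) (at_right t0) (locally (tz1 x t0)) /\
  filterlim (tz2 x) (at_right t0) (locally (tz2 x t0)) /\
  filterlim (td x) (at_right t0) (locally (td x t0)).

(* Global uniform asymptotic stability of the origin (Khalil, Def. 4.4):
   solutions exist for all forward time, the origin is uniformly stable
   with a class-K delta that can be taken radially unbounded (equivalently:
   solutions are uniformly globally bounded), and it is globally
   uniformly attractive. *)
Definition GUAS (w0 a wd h H : R) : Prop :=
  (forall t0 r0 z10 z20 d0, 0 <= t0 ->
     exists x, is_solution w0 a wd h H t0 x /\
       tr x t0 = r0 /\ tz1 x t0 = z10 /\ tz2 x t0 = z20 /\ td x t0 = d0) /\
  (forall eps, 0 < eps -> exists delta, 0 < delta /\
     forall t0 x, 0 <= t0 -> is_solution w0 a wd h H t0 x ->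
       nrm x t0 < delta -> forall t, t0 <= t -> nrm x t < eps) /\
  (forall c, 0 < c -> exists b, 0 < b /\
     forall t0 x, 0 <= t0 -> is_solution w0 a wd h H t0 x ->
       nrm x t0 < c -> forall t, t0 <= t -> nrm x t < b) /\
  (forall eta c, 0 < eta -> 0 < c -> exists T, 0 <= T /\
     forall t0 x, 0 <= t0 -> is_solution w0 a wd h H t0 x ->
       nrm x t0 < c -> forall t, t0 + T <= t -> nrm x t < eta).

From Stdlib Require Import Reals Lra Lia FunctionalExtensionality Factorial.
From Coquelicot Require Import Coquelicot.
Open Scope R_scope.

(* The [d]-equation is autonomous: [d^2] is nonincreasing, and once [|d| <= c] it decays at rate
   [2 wd e^{-c}].  The damping [a e^d / 2] of the [z]-oscillator is positive, so [|z|^2] is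
   nonincreasing; while [|d| <= c] the damping lies between two positive constants, and adding a
   small cross term [e z1 z2] to [|z|^2] gives a strict Lyapunov function, so [z] decays
   exponentially.  The [r]-equation is a stable scalar equation forced by a term of size
   [H a e^c |z|^2 / 2], which by comparison with [y' = - h y + m] bounds [r], and makes it small once
   [z] is small.  All rates and bounds depend only on a bound [c] on the initial state, never on
   the initial time, which gives uniformity.  Solutions exist globally: [e^{-d}] solves a linear
   equation, [z] solves a linear time-varying system (summed Picard series), and [r] is given by
   variation of constants. *)

(** * Differential inequalities *)

Lemma exp_le_exp x y : x <= y -> exp x <= exp y.
Proof. intros [Hlt|<-]; [left; apply exp_increasing; exact Hlt|lra]. Qed.

Lemma exp_mul_exp_opp x : exp x * exp (- x) = 1.
Proof. rewrite <- exp_plus, Rplus_opp_r; apply exp_0. Qed.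

Lemma filterlim_at_right_of_continuous (f : R -> R) s :
  continuous f s -> filterlim f (at_right s) (locally (f s)).
Proof.
  intros Hc. eapply filterlim_filter_le_1; [|exact Hc].
  intros P HP. unfold at_right, within. revert HP; apply filter_imp; auto.
Qed.

Lemma continuous_of_is_derive (f : R -> R) x l : is_derive f x l -> continuous f x.
Proof. intros Hd. apply (ex_derive_continuous (K:=R_AbsRing) (V:=R_NormedModule)). exists l; exact Hd. Qed.

(* Stated at type [R] (not Coquelicot's normed-module carrier) so that [ring] applies to the side goal. *)
Lemma is_derive_eq (f : R -> R) x (l l' : R) : is_derive f x l -> @eq R l l' -> is_derive f x l'.
Proof. intros Hd <-; exact Hd. Qed.

(* [f] is differentiable with derivative [f'] on [(s, +oo)] and right-continuous at [s]:
   the regularity that [is_solution] asks of each component. *)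
Definition derive_after (s : R) (f f' : R -> R) : Prop :=
  (forall t, s < t -> is_derive f t (f' t)) /\
  filterlim f (at_right s) (locally (f s)).

Section DeriveAfter.
Variable s : R.

Lemma derive_after_of_continuous f f' : (forall t, s < t -> is_derive f t (f' t)) ->
  continuous f s -> derive_after s f f'.
Proof. intros Hd Hc; split; [exact Hd|now apply filterlim_at_right_of_continuous]. Qed.

Lemma derive_after_const c : derive_after s (fun _ => c) (fun _ => 0).
Proof. split; [intros t _; apply (is_derive_const c t)|apply filterlim_const]. Qed.

Lemma derive_after_plus f f' g g' : derive_after s f f' -> derive_after s g g' ->
  derive_after s (fun t => f t + g t) (fun t => f' t + g' t).
Proof.
  intros [Df Cf] [Dg Cg]; split.
  - intros t Ht. apply (is_derive_plus f g); auto.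
  - apply (filterlim_comp_2 f g Rplus Cf Cg).
    apply (filterlim_plus (K:=R_AbsRing) (V:=R_NormedModule)).
Qed.

Lemma derive_after_mult f f' g g' : derive_after s f f' -> derive_after s g g' ->
  derive_after s (fun t => f t * g t) (fun t => f' t * g t + f t * g' t).
Proof.
  intros [Df Cf] [Dg Cg]; split.
  - intros t Ht. apply (is_derive_mult f g); auto. intros; apply Rmult_comm.
  - apply (filterlim_comp_2 f g Rmult Cf Cg).
    apply (filterlim_mult (K:=R_AbsRing)).
Qed.

Lemma derive_after_ext f f' g' : derive_after s f f' ->
  (forall t, s < t -> f' t = g' t) -> derive_after s f g'.
Proof. intros [Df Cf] E; split; [intros t Ht; rewrite <- E by exact Ht; auto|exact Cf]. Qed.

Lemma derive_after_sq f f' : derive_after s f f' ->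
  derive_after s (fun t => f t ^ 2) (fun t => 2 * f t * f' t).
Proof.
  intros Df.
  replace (fun t => f t ^ 2) with (fun t => f t * f t) by (apply functional_extensionality; intros; ring).
  apply (derive_after_ext _ _ _ (derive_after_mult _ _ _ _ Df Df)). intros; ring.
Qed.

End DeriveAfter.

Lemma derive_after_shift s f f' u : derive_after s f f' -> s <= u -> derive_after u f f'.
Proof.
  intros [Df Cf] Hu. destruct (Req_dec s u) as [<-|Hne]; [split; auto|].
  apply derive_after_of_continuous; [intros; apply Df; lra|].
  apply (continuous_of_is_derive _ _ (f' u)). apply Df; lra.
Qed.


Lemma derive_after_nonpos_le s g g' : derive_after s g g' ->
  (forall t, s < t -> g' t <= 0) -> forall t, s <= t -> g t <= g s.
Proof.
  intros [Dg Cg] Hneg.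
  assert (Hopen : forall u t, s < u -> u <= t -> g t <= g u).
  { intros u t Hu Hut. destruct (Req_dec u t) as [<-|Hne]; [lra|].
    destruct (MVT_gen g u t g') as [c [Hc E]].
    - intros y Hy. apply Dg. rewrite Rmin_left in Hy by lra. lra.
    - intros y Hy. rewrite Rmin_left, Rmax_right in Hy by lra.
      apply derivable_continuous_pt. exists (g' y). apply is_derive_Reals, Dg; lra.
    - rewrite Rmin_left, Rmax_right in Hc by lra.
      assert (g' c <= 0) by (apply Hneg; lra). nra. }
  (* Right-continuity at [s]: compare with a point [u > s] where [g u] is close to [g s]. *)
  intros t Ht. destruct (Req_dec s t) as [<-|Hne]; [lra|].
  destruct (Rle_or_lt (g t) (g s)) as [|Hlt]; [assumption|exfalso].
  assert (Hp : 0 < g t - g s) by lra.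
  destruct (Cg _ (locally_ball (g s) (mkposreal _ Hp))) as [del Hdel].
  set (u := s + Rmin (del / 2) (t - s)).
  assert (Hdel0 : 0 < del) by apply cond_pos.
  assert (Hu : s < u <= t).
  { unfold u. generalize (Rmin_r (del / 2) (t - s)). apply Rmin_case_strong; lra. }
  assert (Hb : ball s del u).
  { apply Rabs_lt_between. unfold u. generalize (Rmin_l (del / 2) (t - s)).
    apply Rmin_case_strong; intros; unfold minus, plus, opp; simpl; lra. }
  specialize (Hdel u Hb (proj1 Hu)). apply Rabs_lt_between in Hdel.
  specialize (Hopen u t (proj1 Hu) (proj2 Hu)). unfold minus, plus, opp in Hdel; simpl in Hdel. lra.
Qed.

Lemma derive_after_exp s k :
  derive_after s (fun t => exp (k * (t - s))) (fun t => k * exp (k * (t - s))).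
Proof.
  apply derive_after_of_continuous.
  - intros t _. auto_derive; [auto|unfold Rminus; ring].
  - apply ex_derive_continuous. auto_derive. auto.
Qed.

(* Comparison with the linear equation [y' = - k y + m], through the integrating factor [exp (k (t - s))]. *)
Lemma derive_after_comparison s f f' k m : 0 < k -> derive_after s f f' ->
  (forall t, s < t -> f' t <= - k * f t + m) ->
  forall t, s <= t -> f t <= m / k + (f s - m / k) * exp (- k * (t - s)).
Proof.
  intros Hk Df Hd t Ht.
  assert (Hle : (f t - m / k) * exp (k * (t - s)) <= (f s - m / k) * exp (k * (s - s))).
  { apply (derive_after_nonpos_le s _ _
      (derive_after_mult _ _ _ _ _ (derive_after_plus _ _ _ _ _ Df (derive_after_const s (- (m / k))))
        (derive_after_exp s k))); [|exact Ht].
    intros u Hu. specialize (Hd u Hu).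
    assert (0 < exp (k * (u - s))) by apply exp_pos.
    replace ((f' u + 0) * exp (k * (u - s)) + (f u + - (m / k)) * (k * exp (k * (u - s))))
      with ((f' u + k * f u - m) * exp (k * (u - s))) by (field; lra).
    nra. }
  rewrite Rminus_diag, Rmult_0_r, exp_0, Rmult_1_r in Hle.
  assert (He := exp_mul_exp_opp (k * (t - s))).
  assert (0 < exp (- (k * (t - s)))) by apply exp_pos.
  replace (- k * (t - s)) with (- (k * (t - s))) by ring.
  assert (f t - m / k = (f t - m / k) * exp (k * (t - s)) * exp (- (k * (t - s))))
    by (rewrite Rmult_assoc, He; ring).
  nra.
Qed.

Lemma derive_after_ultimate_bound s f f' k m : 0 < k -> 0 <= m -> derive_after s f f' ->
  (forall t, s < t -> f' t <= - k * f t + m) ->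
  forall t, s <= t -> f t <= m / k + f s * exp (- k * (t - s)).
Proof.
  intros Hk Hm Df Hd t Ht.
  assert (0 <= m / k) by (apply Rdiv_le_0_compat; lra).
  assert (0 < exp (- k * (t - s))) by apply exp_pos.
  generalize (derive_after_comparison s f f' k m Hk Df Hd t Ht). nra.
Qed.

Lemma decay_lt A l tau u : 0 <= A -> 0 < l -> 0 < tau -> A / (l * tau) <= u ->
  A * exp (- l * u) < tau.
Proof.
  intros HA Hl Ht Hu.
  assert (H1 := exp_ineq1_le (l * u)).
  assert (Hlu : A / tau <= l * u).
  { replace (A / tau) with (l * (A / (l * tau))) by (field; lra). apply Rmult_le_compat_l; lra. }
  assert (HA' : A < tau * exp (l * u)) by (assert (A / tau * tau = A) by (field; lra); nra).
  assert (He := exp_mul_exp_opp (l * u)).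
  assert (0 < exp (- (l * u))) by apply exp_pos.
  replace (- l * u) with (- (l * u)) by ring. nra.
Qed.

Lemma mul_exp_sub1_nonneg d : 0 <= d * (exp d - 1).
Proof.
  destruct (Rle_or_lt 0 d) as [Hd|Hd]; [generalize (exp_ineq1_le d); nra|].
  assert (exp d < 1) by (rewrite <- exp_0; apply exp_increasing; lra). nra.
Qed.

Lemma exp_opp_mul_sq_le c d : Rabs d <= c -> exp (- c) * d ^ 2 <= d * (exp d - 1).
Proof.
  intros Hc. apply Rabs_le_between in Hc.
  destruct (Rle_or_lt 0 d) as [Hd|Hd].
  - assert (exp (- c) <= 1) by (rewrite <- exp_0; apply exp_le_exp; lra).
    generalize (exp_ineq1_le d). nra.
  - assert (exp (- c) <= exp d) by (apply exp_le_exp; lra).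
    assert (Hx := exp_ineq1_le (- d)). assert (Hm := exp_mul_exp_opp d).
    assert (0 < exp d) by apply exp_pos.
    assert (1 - exp d >= - d * exp d) by nra. nra.
Qed.

Lemma sq_add_cross_between e p q : 0 < e <= 1 ->
  (p ^ 2 + q ^ 2) / 2 <= p ^ 2 + q ^ 2 + e * (p * q) <= 3 / 2 * (p ^ 2 + q ^ 2).
Proof.
  intros He. assert (0 <= (p + q) ^ 2) by apply pow2_ge_0. assert (0 <= (p - q) ^ 2) by apply pow2_ge_0.
  destruct (Rle_or_lt 0 (p * q));
    [assert (0 <= e * (p * q) <= p * q)|assert (p * q <= e * (p * q) <= 0)]; split; nra.
Qed.

(* Derivative of [p^2 + q^2 + e p q] along [p' = w0 q], [q' = - w0 p - b q]: the cross term
   [e p q] turns the dissipation [-2 b q^2] into dissipation in both variables. *)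
Lemma cross_lyapunov_dissipation w0 e b bmin bmax p q :
  0 < w0 -> 0 < e <= 1 -> 0 < bmin <= b -> b <= bmax -> e * (w0 + bmax ^ 2 / (2 * w0)) <= bmin ->
  2 * p * (w0 * q) + 2 * q * (- w0 * p - b * q) + e * (w0 * q * q + p * (- w0 * p - b * q))
  <= - (2 / 3 * Rmin (e * w0 / 2) bmin) * (p ^ 2 + q ^ 2 + e * (p * q)).
Proof.
  intros Hw He Hb Hbmax Hsmall.
  set (k := Rmin (e * w0 / 2) bmin).
  assert (Hk1 : k <= e * w0 / 2) by apply Rmin_l.
  assert (Hk2 : k <= bmin) by apply Rmin_r.
  assert (Hk0 : 0 < k) by (unfold k; apply Rmin_glb_lt; [apply Rdiv_lt_0_compat|]; nra).
  assert (Hyoung : - e * b * (p * q) <= e * w0 / 2 * p ^ 2 + e * (b ^ 2 / (2 * w0)) * q ^ 2).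
  { assert (Hsq : 0 <= e * (w0 / 2 * (p + b / w0 * q) ^ 2)) by (apply Rmult_le_pos; [lra|apply Rmult_le_pos; [lra|apply pow2_ge_0]]).
    replace (e * (w0 / 2 * (p + b / w0 * q) ^ 2))
      with (e * w0 / 2 * p ^ 2 + e * (b ^ 2 / (2 * w0)) * q ^ 2 + e * b * (p * q)) in Hsq
      by (field; lra).
    lra. }
  assert (Hb2 : b ^ 2 / (2 * w0) <= bmax ^ 2 / (2 * w0)).
  { unfold Rdiv. apply Rmult_le_compat_r; [left; apply Rinv_0_lt_compat; lra|nra]. }
  assert (Hqcoef : e * w0 + e * (b ^ 2 / (2 * w0)) <= b).
  { assert (e * (b ^ 2 / (2 * w0)) <= e * (bmax ^ 2 / (2 * w0))) by (apply Rmult_le_compat_l; lra).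
    lra. }
  assert (Hpq := sq_add_cross_between e p q He).
  assert (0 <= q ^ 2) by nra. assert (0 <= p ^ 2) by nra.
  assert (e * w0 * q ^ 2 + e * (b ^ 2 / (2 * w0)) * q ^ 2 <= b * q ^ 2) by nra.
  assert (k * p ^ 2 <= e * w0 / 2 * p ^ 2) by nra.
  assert (k * q ^ 2 <= b * q ^ 2) by nra.
  nra.
Qed.

(** * Estimates along solutions *)

Definition sqnorm (x : traj) (t : R) : R :=
  tr x t ^ 2 + tz1 x t ^ 2 + tz2 x t ^ 2 + td x t ^ 2.

Lemma sqnorm_nonneg x t : 0 <= sqnorm x t.
Proof. unfold sqnorm. nra. Qed.

Lemma sqnorm_lt_of_nrm_lt x t c : nrm x t < c -> sqnorm x t < c ^ 2.
Proof.
  intros Hn. assert (H0 := sqnorm_nonneg x t).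
  assert (0 <= nrm x t) by apply sqrt_pos.
  replace (sqnorm x t) with (nrm x t ^ 2) by (unfold nrm; rewrite pow2_sqrt; [reflexivity|exact H0]).
  nra.
Qed.

Lemma nrm_lt_of_sqnorm_lt x t c : 0 < c -> sqnorm x t < c ^ 2 -> nrm x t < c.
Proof.
  intros Hc Hs. rewrite <- (sqrt_pow2 c) by lra.
  apply sqrt_lt_1_alt. split; [apply sqnorm_nonneg|exact Hs].
Qed.

Lemma abs_le_of_sq_le x c : 0 <= c -> x ^ 2 <= c ^ 2 -> Rabs x <= c.
Proof.
  intros Hc Hx. rewrite <- (Rabs_pos_eq c Hc). apply Rsqr_le_abs_0. unfold Rsqr. nra.
Qed.

Lemma abs_td_le_of_nrm_lt t x c : nrm x t < c -> Rabs (td x t) <= c.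
Proof.
  intros Hn. assert (Hs := sqnorm_lt_of_nrm_lt _ _ _ Hn).
  assert (0 <= nrm x t) by apply sqrt_pos.
  apply abs_le_of_sq_le; [lra|]. unfold sqnorm in Hs. nra.
Qed.

Section Estimates.
Variables w0 a wd h H : R.
Hypotheses (Hw0 : 0 < w0) (Ha : 0 < a) (Hwd : 0 < wd) (Hh : 0 < h) (HH : 0 < H).
Local Notation solution := (is_solution w0 a wd h H).

Definition damping (x : traj) (t : R) : R := a / 2 * exp (td x t).

Lemma damping_pos x t : 0 < damping x t.
Proof. unfold damping. generalize (exp_pos (td x t)). nra. Qed.

Lemma solution_derive_after t0 x : solution t0 x ->
  derive_after t0 (tr x) (fun t => - h * tr x t - H * (damping x t * tz2 x t ^ 2)) /\
  derive_after t0 (tz1 x) (fun t => w0 * tz2 x t) /\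
  derive_after t0 (tz2 x) (fun t => - w0 * tz1 x t - damping x t * tz2 x t) /\
  derive_after t0 (td x) (fun t => - wd * (exp (td x t) - 1)).
Proof.
  intros [D [Cr [Cz1 [Cz2 Cd]]]]. unfold damping.
  split; [|split; [|split]]; (split; [intros u Hu; destruct (D u Hu) as [Dr [Dz1 [Dz2 Dd]]]|assumption]).
  - apply (is_derive_eq _ _ _ _ Dr). unfold f_r, qform. ring.
  - apply (is_derive_eq _ _ _ _ Dz1). unfold f_z1. ring.
  - apply (is_derive_eq _ _ _ _ Dz2). unfold f_z2. ring.
  - exact Dd.
Qed.

Lemma d_sq_noninc t0 x : solution t0 x -> forall t, t0 <= t -> td x t ^ 2 <= td x t0 ^ 2.
Proof.
  intros Hs. destruct (solution_derive_after _ _ Hs) as [_ [_ [_ Dd]]].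
  apply (derive_after_nonpos_le _ _ _ (derive_after_sq _ _ _ Dd)).
  intros t _. generalize (mul_exp_sub1_nonneg (td x t)). nra.
Qed.

Lemma d_abs_le t0 x c : solution t0 x -> Rabs (td x t0) <= c ->
  forall t, t0 <= t -> Rabs (td x t) <= c.
Proof.
  intros Hs Hc t Ht. assert (0 <= c) by (generalize (Rabs_pos (td x t0)); lra).
  apply abs_le_of_sq_le; [assumption|].
  apply (Rle_trans _ _ _ (d_sq_noninc _ _ Hs t Ht)).
  rewrite <- (pow2_abs (td x t0)). apply pow_incr. split; [apply Rabs_pos|assumption].
Qed.

Lemma damping_between t0 x c : solution t0 x -> Rabs (td x t0) <= c ->
  forall t, t0 <= t -> a / 2 * exp (- c) <= damping x t <= a / 2 * exp c.
Proof.
  intros Hs Hc t Ht.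
  generalize (d_abs_le _ _ _ Hs Hc t Ht). intros Hd. apply Rabs_le_between in Hd. unfold damping.
  split; apply Rmult_le_compat_l; try lra; apply exp_le_exp; lra.
Qed.

(* While [|d| <= c], [d (e^d - 1) >= e^{-c} d^2]. *)
Lemma d_sq_decay t0 x c : solution t0 x -> Rabs (td x t0) <= c ->
  forall t, t0 <= t -> td x t ^ 2 <= td x t0 ^ 2 * exp (- (2 * wd * exp (- c)) * (t - t0)).
Proof.
  intros Hs Hc. destruct (solution_derive_after _ _ Hs) as [_ [_ [_ Dd]]].
  assert (Hk : 0 < 2 * wd * exp (- c)) by (generalize (exp_pos (- c)); nra).
  intros t Ht.
  refine (Rle_trans _ _ _ (derive_after_ultimate_bound _ _ _ _ 0 Hk (Rle_refl 0)
                             (derive_after_sq _ _ _ Dd) _ t Ht) _).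
  - intros u Hu. generalize (exp_opp_mul_sq_le c _ (d_abs_le _ _ _ Hs Hc u (Rlt_le _ _ Hu))). nra.
  - unfold Rdiv. lra.
Qed.

Lemma z_sq_noninc t0 x : solution t0 x ->
  forall t, t0 <= t -> tz1 x t ^ 2 + tz2 x t ^ 2 <= tz1 x t0 ^ 2 + tz2 x t0 ^ 2.
Proof.
  intros Hs. destruct (solution_derive_after _ _ Hs) as [_ [Dz1 [Dz2 _]]].
  apply (derive_after_nonpos_le _ _ _
           (derive_after_plus _ _ _ _ _ (derive_after_sq _ _ _ Dz1) (derive_after_sq _ _ _ Dz2))).
  intros t _. generalize (damping_pos x t). nra.
Qed.

(* Weight of the cross term in the Lyapunov function [z1^2 + z2^2 + e z1 z2], chosen so that
   [cross_lyapunov_dissipation] applies while [|d| <= c], i.e. while the damping lies in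
   [[a e^{-c} / 2, a e^c / 2]]. *)
Definition z_weight (c : R) : R :=
  Rmin 1 (a / 2 * exp (- c) / (w0 + (a / 2 * exp c) ^ 2 / (2 * w0))).

Definition z_rate (c : R) : R := 2 / 3 * Rmin (z_weight c * w0 / 2) (a / 2 * exp (- c)).

Lemma z_weight_spec c : 0 < z_weight c <= 1 /\
  z_weight c * (w0 + (a / 2 * exp c) ^ 2 / (2 * w0)) <= a / 2 * exp (- c).
Proof.
  assert (Hm : 0 < a / 2 * exp (- c)) by (generalize (exp_pos (- c)); nra).
  assert (HX : 0 < w0 + (a / 2 * exp c) ^ 2 / (2 * w0))
    by (assert (0 <= (a / 2 * exp c) ^ 2 / (2 * w0)) by (apply Rdiv_le_0_compat; [apply pow2_ge_0|lra]); lra).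
  assert (Hq : 0 < a / 2 * exp (- c) / (w0 + (a / 2 * exp c) ^ 2 / (2 * w0))) by (apply Rdiv_lt_0_compat; lra).
  unfold z_weight. split; [split; [apply Rmin_glb_lt; lra|apply Rmin_l]|].
  apply (Rle_trans _ (a / 2 * exp (- c) / (w0 + (a / 2 * exp c) ^ 2 / (2 * w0)) * (w0 + (a / 2 * exp c) ^ 2 / (2 * w0)))).
  - apply Rmult_le_compat_r; [lra|apply Rmin_r].
  - right. unfold Rdiv at 1. rewrite Rmult_assoc, Rinv_l; [ring|lra].
Qed.

Lemma z_rate_pos c : 0 < z_rate c.
Proof.
  destruct (z_weight_spec c) as [[He _] _]. generalize (exp_pos (- c)). intros.
  unfold z_rate. apply Rmult_lt_0_compat; [lra|]. apply Rmin_glb_lt; [apply Rdiv_lt_0_compat|]; nra.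
Qed.

Lemma z_sq_decay t0 x c : solution t0 x -> Rabs (td x t0) <= c -> forall t, t0 <= t ->
  tz1 x t ^ 2 + tz2 x t ^ 2 <= 3 * (tz1 x t0 ^ 2 + tz2 x t0 ^ 2) * exp (- z_rate c * (t - t0)).
Proof.
  intros Hs Hc. destruct (solution_derive_after _ _ Hs) as [_ [Dz1 [Dz2 _]]].
  destruct (z_weight_spec c) as [He Hsmall]. set (e := z_weight c) in *.
  assert (DW := derive_after_plus _ _ _ _ _
                  (derive_after_plus _ _ _ _ _ (derive_after_sq _ _ _ Dz1) (derive_after_sq _ _ _ Dz2))
                  (derive_after_mult _ _ _ _ _ (derive_after_const t0 e) (derive_after_mult _ _ _ _ _ Dz1 Dz2))).
  assert (HW : forall t, t0 <= t -> tz1 x t ^ 2 + tz2 x t ^ 2 + e * (tz1 x t * tz2 x t) <=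
     0 / z_rate c + (tz1 x t0 ^ 2 + tz2 x t0 ^ 2 + e * (tz1 x t0 * tz2 x t0)) * exp (- z_rate c * (t - t0))).
  { apply (derive_after_ultimate_bound _ _ _ _ _ (z_rate_pos c) (Rle_refl 0) DW).
    intros u Hu. destruct (damping_between _ _ _ Hs Hc u (Rlt_le _ _ Hu)) as [Hb1 Hb2].
    assert (Hmin : 0 < a / 2 * exp (- c)) by (generalize (exp_pos (- c)); nra).
    generalize (cross_lyapunov_dissipation w0 e (damping x u) _ _ (tz1 x u) (tz2 x u)
                  Hw0 He (conj Hmin Hb1) Hb2 Hsmall).
    unfold z_rate. fold e. lra. }
  intros t Ht. specialize (HW t Ht). unfold Rdiv in HW.
  set (p := tz1 x t) in *. set (q := tz2 x t) in *. set (p0 := tz1 x t0) in *. set (q0 := tz2 x t0) in *.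
  assert (Hex : 0 < exp (- z_rate c * (t - t0))) by apply exp_pos.
  assert (L1 := proj1 (sq_add_cross_between e p q He)).
  assert (L2 := proj2 (sq_add_cross_between e p0 q0 He)).
  assert ((p0 ^ 2 + q0 ^ 2 + e * (p0 * q0)) * exp (- z_rate c * (t - t0)) <=
          3 / 2 * (p0 ^ 2 + q0 ^ 2) * exp (- z_rate c * (t - t0))) by (apply Rmult_le_compat_r; lra).
  lra.
Qed.

(* The [r]-equation is a stable scalar equation driven by [- H (damping) z2^2]. *)
Lemma r_sq_bound t0 x s Q : solution t0 x -> t0 <= s ->
  (forall u, s <= u -> damping x u * tz2 x u ^ 2 <= Q) ->
  forall t, s <= t -> tr x t ^ 2 <= (H * Q / h) ^ 2 + tr x s ^ 2 * exp (- h * (t - s)).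
Proof.
  intros Hs Hts HQ. destruct (solution_derive_after _ _ Hs) as [Dr _].
  assert (Hm : 0 <= H ^ 2 * Q ^ 2 / h) by (apply Rdiv_le_0_compat; [nra|lra]).
  replace ((H * Q / h) ^ 2) with (H ^ 2 * Q ^ 2 / h / h) by (field; lra).
  apply (derive_after_ultimate_bound _ _ _ _ _ Hh Hm (derive_after_sq _ _ _ (derive_after_shift _ _ _ _ Dr Hts))).
  intros u Hu. specialize (HQ u (Rlt_le _ _ Hu)).
  set (P := damping x u * tz2 x u ^ 2) in *. set (r := tr x u).
  assert (HP : 0 <= P) by (apply Rmult_le_pos; [left; apply damping_pos|apply pow2_ge_0]).
  assert (Hsq : 0 <= (h * r + H * P) ^ 2 / h) by (apply Rdiv_le_0_compat; [apply pow2_ge_0|lra]).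
  replace ((h * r + H * P) ^ 2 / h) with (h * r ^ 2 + 2 * H * r * P + H ^ 2 * P ^ 2 / h) in Hsq by (field; lra).
  assert (H ^ 2 * P ^ 2 / h <= H ^ 2 * Q ^ 2 / h).
  { unfold Rdiv. apply Rmult_le_compat_r; [left; apply Rinv_0_lt_compat; lra|].
    apply Rmult_le_compat_l; nra. }
  nra.
Qed.

Definition r_gain (c : R) : R := (H * (a / 2 * exp c) / h) ^ 2.

Lemma r_gain_nonneg c : 0 <= r_gain c.
Proof. apply pow2_ge_0. Qed.

Lemma sqnorm_bound t0 x c : solution t0 x -> Rabs (td x t0) <= c ->
  forall t, t0 <= t -> sqnorm x t <= sqnorm x t0 + r_gain c * sqnorm x t0 ^ 2.
Proof.
  intros Hs Hc t Ht.
  set (Q := a / 2 * exp c * sqnorm x t0).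
  assert (HQ : forall u, t0 <= u -> damping x u * tz2 x u ^ 2 <= Q).
  { intros u Hu. destruct (damping_between _ _ _ Hs Hc u Hu) as [_ Hb].
    assert (Hz := z_sq_noninc _ _ Hs u Hu).
    assert (tz2 x u ^ 2 <= sqnorm x t0) by (unfold sqnorm; nra).
    apply (Rle_trans _ (a / 2 * exp c * tz2 x u ^ 2)); [apply Rmult_le_compat_r; [apply pow2_ge_0|lra]|].
    apply Rmult_le_compat_l; [generalize (exp_pos c); nra|lra]. }
  assert (Hr := r_sq_bound _ _ _ _ Hs (Rle_refl _) HQ t Ht).
  replace ((H * Q / h) ^ 2) with (r_gain c * sqnorm x t0 ^ 2) in Hr by (unfold r_gain, Q; field; lra).
  assert (exp (- h * (t - t0)) <= 1) by (rewrite <- exp_0; apply exp_le_exp; nra).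
  assert (tr x t0 ^ 2 * exp (- h * (t - t0)) <= tr x t0 ^ 2)
    by (rewrite <- (Rmult_1_r (tr x t0 ^ 2)) at 2; apply Rmult_le_compat_l; [apply pow2_ge_0|lra]).
  generalize (z_sq_noninc _ _ Hs t Ht) (d_sq_noninc _ _ Hs t Ht). unfold sqnorm in *. lra.
Qed.

Lemma uniform_stability eps : 0 < eps -> exists delta, 0 < delta /\
  forall t0 x, 0 <= t0 -> solution t0 x -> nrm x t0 < delta -> forall t, t0 <= t -> nrm x t < eps.
Proof.
  intros Heps. set (G := r_gain 1). assert (HG : 0 <= G) by apply r_gain_nonneg.
  assert (Hsq : 0 < sqrt (1 + G)) by (apply sqrt_lt_R0; lra).
  set (delta := Rmin 1 (eps / sqrt (1 + G))).
  assert (Hdelta : 0 < delta) by (apply Rmin_glb_lt; [lra|apply Rdiv_lt_0_compat; lra]).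
  exists delta. split; [exact Hdelta|]. intros t0 x _ Hs Hn t Ht.
  assert (Hd1 : delta <= 1) by apply Rmin_l.
  assert (Hd2 : delta <= eps / sqrt (1 + G)) by apply Rmin_r.
  assert (HS0 := sqnorm_lt_of_nrm_lt _ _ _ Hn). assert (Hpos := sqnorm_nonneg x t0).
  assert (Hbound := sqnorm_bound _ _ _ Hs (abs_td_le_of_nrm_lt t0 x 1 ltac:(lra)) t Ht). fold G in Hbound.
  apply nrm_lt_of_sqnorm_lt; [assumption|].
  (* [S0 + G S0^2 <= (1 + G) S0 < (1 + G) delta^2 <= eps^2] *)
  assert (HS1 : sqnorm x t0 * (1 + G) < eps ^ 2).
  { assert (delta ^ 2 <= (eps / sqrt (1 + G)) ^ 2) by (apply pow_incr; lra).
    replace ((eps / sqrt (1 + G)) ^ 2) with (eps ^ 2 / (1 + G)) in *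
      by (unfold Rdiv; rewrite Rpow_mult_distr, pow_inv, pow2_sqrt by lra; reflexivity).
    apply (Rlt_le_trans _ (eps ^ 2 / (1 + G) * (1 + G))); [apply Rmult_lt_compat_r; lra|].
    right. field. lra. }
  assert (Hle1 : sqnorm x t0 <= 1) by nra.
  assert (sqnorm x t0 ^ 2 <= sqnorm x t0) by nra.
  assert (G * sqnorm x t0 ^ 2 <= G * sqnorm x t0) by (apply Rmult_le_compat_l; lra).
  lra.
Qed.

Lemma sqnorm_lt_of_nrm_start_lt t0 x c : solution t0 x -> nrm x t0 < c ->
  forall t, t0 <= t -> sqnorm x t < c ^ 2 + r_gain c * (c ^ 2) ^ 2.
Proof.
  intros Hs Hn t Ht. assert (HG := r_gain_nonneg c).
  assert (HS0 := sqnorm_lt_of_nrm_lt _ _ _ Hn). assert (Hpos := sqnorm_nonneg x t0).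
  assert (Hbound := sqnorm_bound _ _ _ Hs (abs_td_le_of_nrm_lt _ _ _ Hn) t Ht).
  assert (sqnorm x t0 ^ 2 <= (c ^ 2) ^ 2) by (apply pow_incr; lra).
  assert (r_gain c * sqnorm x t0 ^ 2 <= r_gain c * (c ^ 2) ^ 2) by (apply Rmult_le_compat_l; lra).
  lra.
Qed.

Lemma uniform_boundedness c : 0 < c -> exists b, 0 < b /\
  forall t0 x, 0 <= t0 -> solution t0 x -> nrm x t0 < c -> forall t, t0 <= t -> nrm x t < b.
Proof.
  intros Hc. set (B := c ^ 2 + r_gain c * (c ^ 2) ^ 2).
  assert (HB : 0 < B) by (unfold B; generalize (r_gain_nonneg c) (pow2_ge_0 (c ^ 2)); nra).
  exists (sqrt B). split; [now apply sqrt_lt_R0|]. intros t0 x _ Hs Hn t Ht.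
  apply nrm_lt_of_sqnorm_lt; [now apply sqrt_lt_R0|]. rewrite pow2_sqrt by lra.
  exact (sqnorm_lt_of_nrm_start_lt _ _ _ Hs Hn t Ht).
Qed.

Definition eventually_uniformly (P : traj -> R -> Prop) (c : R) : Prop :=
  exists T, 0 <= T /\ forall t0 x, 0 <= t0 -> solution t0 x -> nrm x t0 < c ->
    forall t, t0 + T <= t -> P x t.

Lemma eventually_uniformly_and (P Q : traj -> R -> Prop) c :
  eventually_uniformly P c -> eventually_uniformly Q c ->
  eventually_uniformly (fun x t => P x t /\ Q x t) c.
Proof.
  intros [T1 [HT1 HP]] [T2 [HT2 HQ]]. exists (Rmax T1 T2). split; [apply (Rle_trans _ _ _ HT1), Rmax_l|].
  intros t0 x Ht0 Hs Hn t Ht. generalize (Rmax_l T1 T2) (Rmax_r T1 T2). intros.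
  split; [apply (HP t0 x)|apply (HQ t0 x)]; auto; lra.
Qed.

Lemma d_eventually_small c tau : 0 < c -> 0 < tau ->
  eventually_uniformly (fun x t => td x t ^ 2 < tau) c.
Proof.
  intros Hc Htau. set (k := 2 * wd * exp (- c)).
  assert (Hk : 0 < k) by (unfold k; generalize (exp_pos (- c)); nra).
  exists (c ^ 2 / (k * tau)). split; [apply Rdiv_le_0_compat; [apply pow2_ge_0|nra]|].
  intros t0 x _ Hs Hn t Ht.
  assert (HS0 := sqnorm_lt_of_nrm_lt _ _ _ Hn). unfold sqnorm in HS0.
  assert (Hdecay := d_sq_decay _ _ _ Hs (abs_td_le_of_nrm_lt _ _ _ Hn) t
                      ltac:(generalize (Rdiv_le_0_compat (c ^ 2) (k * tau) (pow2_ge_0 c) ltac:(nra)); lra)).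
  fold k in Hdecay.
  assert (td x t0 ^ 2 * exp (- k * (t - t0)) <= c ^ 2 * exp (- k * (t - t0)))
    by (apply Rmult_le_compat_r; [left; apply exp_pos|nra]).
  generalize (decay_lt (c ^ 2) k tau (t - t0) (pow2_ge_0 c) Hk Htau ltac:(lra)). lra.
Qed.

Lemma z_eventually_small c tau : 0 < c -> 0 < tau ->
  eventually_uniformly (fun x t => tz1 x t ^ 2 + tz2 x t ^ 2 < tau) c.
Proof.
  intros Hc Htau. set (k := z_rate c). assert (Hk : 0 < k) by apply z_rate_pos.
  assert (HA : 0 <= 3 * c ^ 2) by (generalize (pow2_ge_0 c); lra).
  exists (3 * c ^ 2 / (k * tau)). split; [apply Rdiv_le_0_compat; nra|].
  intros t0 x _ Hs Hn t Ht.
  assert (HS0 := sqnorm_lt_of_nrm_lt _ _ _ Hn). unfold sqnorm in HS0.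
  assert (Hdecay := z_sq_decay _ _ _ Hs (abs_td_le_of_nrm_lt _ _ _ Hn) t
                      ltac:(generalize (Rdiv_le_0_compat (3 * c ^ 2) (k * tau) HA ltac:(nra)); lra)).
  fold k in Hdecay.
  assert (3 * (tz1 x t0 ^ 2 + tz2 x t0 ^ 2) * exp (- k * (t - t0)) <= 3 * c ^ 2 * exp (- k * (t - t0)))
    by (apply Rmult_le_compat_r; [left; apply exp_pos|nra]).
  generalize (decay_lt (3 * c ^ 2) k tau (t - t0) HA Hk Htau ltac:(lra)). lra.
Qed.

(* Once [z] is small the forcing of the [r]-equation is small, and [r] decays below it. *)
Lemma r_eventually_small c tau : 0 < c -> 0 < tau ->
  eventually_uniformly (fun x t => tr x t ^ 2 < tau) c.
Proof.
  intros Hc Htau. set (G := r_gain c). assert (HG : 0 <= G) by apply r_gain_nonneg.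
  set (ez := Rmin 1 (tau / (2 * (G + 1)))).
  assert (Hez : 0 < ez) by (apply Rmin_glb_lt; [lra|apply Rdiv_lt_0_compat; lra]).
  assert (Hforcing : G * ez ^ 2 < tau / 2).
  { assert (ez <= 1) by apply Rmin_l. assert (ez <= tau / (2 * (G + 1))) by apply Rmin_r.
    assert (G * ez ^ 2 <= G * (tau / (2 * (G + 1)))) by (apply Rmult_le_compat_l; nra).
    replace (G * (tau / (2 * (G + 1)))) with (tau / 2 - tau / (2 * (G + 1))) in * by (field; lra).
    assert (0 < tau / (2 * (G + 1))) by (apply Rdiv_lt_0_compat; lra). lra. }
  set (B := c ^ 2 + G * (c ^ 2) ^ 2).
  assert (HB : 0 <= B) by (unfold B; generalize (pow2_ge_0 (c ^ 2)); nra).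
  destruct (z_eventually_small c ez Hc Hez) as [T1 [HT1 Hz]].
  set (T2 := B / (h * (tau / 2))). assert (HT2 : 0 <= T2) by (apply Rdiv_le_0_compat; nra).
  exists (T1 + T2). split; [lra|].
  intros t0 x Ht0 Hs Hn t Ht. set (s := t0 + T1).
  assert (HQ : forall u, s <= u -> damping x u * tz2 x u ^ 2 <= a / 2 * exp c * ez).
  { intros u Hu. destruct (damping_between _ _ _ Hs (abs_td_le_of_nrm_lt _ _ _ Hn) u ltac:(unfold s in Hu; lra)) as [_ Hb].
    assert (Hzu := Hz t0 x Ht0 Hs Hn u Hu).
    apply (Rle_trans _ (a / 2 * exp c * tz2 x u ^ 2)); [apply Rmult_le_compat_r; [apply pow2_ge_0|lra]|].
    apply Rmult_le_compat_l; [generalize (exp_pos c); nra|generalize (pow2_ge_0 (tz1 x u)); lra]. }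
  assert (Hr := r_sq_bound t0 x s _ Hs ltac:(unfold s; lra) HQ t ltac:(unfold s; lra)).
  replace ((H * (a / 2 * exp c * ez) / h) ^ 2) with (G * ez ^ 2) in Hr by (unfold G, r_gain; field; lra).
  assert (Hrs : tr x s ^ 2 <= B).
  { assert (Hbound := sqnorm_lt_of_nrm_start_lt _ _ _ Hs Hn s ltac:(unfold s; lra)). fold G B in Hbound.
    unfold sqnorm in Hbound. generalize (pow2_ge_0 (tz1 x s)) (pow2_ge_0 (tz2 x s)) (pow2_ge_0 (td x s)). lra. }
  assert (tr x s ^ 2 * exp (- h * (t - s)) <= B * exp (- h * (t - s)))
    by (apply Rmult_le_compat_r; [left; apply exp_pos|lra]).
  generalize (decay_lt B h (tau / 2) (t - s) HB Hh ltac:(lra) ltac:(unfold s, T2 in *; lra)). lra.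
Qed.

Lemma uniform_attractivity eta c : 0 < eta -> 0 < c -> exists T, 0 <= T /\
  forall t0 x, 0 <= t0 -> solution t0 x -> nrm x t0 < c -> forall t, t0 + T <= t -> nrm x t < eta.
Proof.
  intros Heta Hc. set (tau := eta ^ 2 / 3). assert (Htau : 0 < tau) by (unfold tau; nra).
  destruct (eventually_uniformly_and _ _ _ (r_eventually_small c tau Hc Htau)
              (eventually_uniformly_and _ _ _ (z_eventually_small c tau Hc Htau)
                 (d_eventually_small c tau Hc Htau))) as [T [HT Hsmall]].
  exists T. split; [exact HT|]. intros t0 x Ht0 Hs Hn t Ht.
  destruct (Hsmall t0 x Ht0 Hs Hn t Ht) as [Hr [Hz Hd]].
  apply nrm_lt_of_sqnorm_lt; [assumption|]. unfold sqnorm, tau in *. lra.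
Qed.
End Estimates.

(** * Existence of solutions *)

Lemma continuous_Rplus (f g : R -> R) x :
  continuous f x -> continuous g x -> continuous (fun t => f t + g t) x.
Proof. intros; apply (continuous_plus (V:=R_NormedModule) f g); auto. Qed.

Lemma continuous_Rmult (f g : R -> R) x :
  continuous f x -> continuous g x -> continuous (fun t => f t * g t) x.
Proof. intros; apply (continuous_mult (K:=R_AbsRing) f g); auto. Qed.

Lemma continuous_Rmax_l t0 x : continuous (fun t => Rmax t t0) x.
Proof.
  assert (E : forall t, (t + t0 + Rabs (t - t0)) * / 2 = Rmax t t0).
  { intros t. unfold Rmax. destruct (Rle_dec t t0).
    - rewrite Rabs_left1 by lra. field.
    - rewrite Rabs_right by lra. field. }
  apply (continuous_ext (fun t => (t + t0 + Rabs (t - t0)) * / 2)); [exact E|].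
  apply continuous_Rmult; [|apply continuous_const].
  apply continuous_Rplus; [apply continuous_Rplus; [apply continuous_id|apply continuous_const]|].
  apply continuous_Rabs_comp. apply continuous_Rplus; [apply continuous_id|apply continuous_const].
Qed.

(* Precomposing with [t |-> Rmax t t0] extends a function known on [[t0, +oo)] to [R] by a constant. *)
Lemma continuous_comp_Rmax (g : R -> R) t0 x :
  continuous g (Rmax x t0) -> continuous (fun t => g (Rmax t t0)) x.
Proof. intros Hg. apply (continuous_comp (fun t => Rmax t t0) g); [apply continuous_Rmax_l|exact Hg]. Qed.

Lemma is_derive_comp_Rmax (g : R -> R) t0 t l : t0 < t ->
  is_derive g t l -> is_derive (fun s => g (Rmax s t0)) t l.
Proof.
  intros Ht Hg. apply (is_derive_ext_loc g); [|exact Hg].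
  assert (Hp : 0 < t - t0) by lra. exists (mkposreal _ Hp). intros y Hy.
  apply Rabs_lt_between in Hy. unfold minus, plus, opp in Hy; simpl in Hy.
  rewrite Rmax_left by lra. reflexivity.
Qed.

Lemma ex_RInt_of_continuous (F : R -> R) a b : (forall x, continuous F x) -> ex_RInt F a b.
Proof. intros HF. apply (ex_RInt_continuous (V:=R_CompleteNormedModule)). auto. Qed.

Lemma is_derive_RInt_upper (F : R -> R) t0 b : (forall x, continuous F x) ->
  is_derive (fun b => RInt F t0 b) b (F b).
Proof.
  intros HF. apply (is_derive_RInt F (fun b => RInt F t0 b) t0 b); [|apply HF].
  apply filter_forall. intros y. apply (RInt_correct (V:=R_CompleteNormedModule)).
  now apply ex_RInt_of_continuous.
Qed.

Lemma RInt_pow_shift C n t0 t :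
  RInt (fun s => C * (s - t0) ^ n) t0 t = C * (t - t0) ^ S n / INR (S n).
Proof.
  assert (HS : INR (S n) <> 0) by (apply not_0_INR; lia).
  apply is_RInt_unique.
  replace (C * (t - t0) ^ S n / INR (S n)) with
    (minus (C * (t - t0) ^ S n / INR (S n)) (C * (t0 - t0) ^ S n / INR (S n)))
    by (rewrite Rminus_diag, pow_i by lia; unfold minus, plus, opp; simpl; field; exact HS).
  apply (is_RInt_derive (fun s => C * (s - t0) ^ S n / INR (S n))).
  - intros x _. auto_derive; [auto|].
    change (match n with 0%nat => 1 | S _ => INR n + 1 end) with (INR (S n)).
    match goal with |- ?l = ?r => change (@eq R l r) end. unfold Rminus. field. exact HS.
  - intros x _. eapply continuous_of_is_derive. auto_derive; [auto|reflexivity].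
Qed.

Lemma abs_RInt_le_pow_shift (F : R -> R) C n t0 t : (forall x, continuous F x) -> t0 <= t ->
  (forall s, t0 < s < t -> Rabs (F s) <= C * (s - t0) ^ n) ->
  Rabs (RInt F t0 t) <= C * (t - t0) ^ S n / INR (S n).
Proof.
  intros HF Ht Hb.
  apply (Rle_trans _ _ _ (abs_RInt_le F t0 t Ht (ex_RInt_of_continuous F t0 t HF))).
  rewrite <- RInt_pow_shift. apply RInt_le; auto.
  - apply ex_RInt_of_continuous. intros; now apply continuous_Rabs_comp.
  - apply ex_RInt_of_continuous. intros x. eapply continuous_of_is_derive. auto_derive; [auto|reflexivity].
Qed.

(* [exp (- d)] solves the linear equation [u' = - wd (u - 1)]. *)
Definition d_sol (wd t0 d0 s : R) : R := - ln (1 + (exp (- d0) - 1) * exp (- wd * (s - t0))).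

Section DSolution.
Variables wd t0 d0 : R.
Hypothesis Hwd : 0 < wd.

Lemma d_sol_arg_pos s : t0 <= s -> 0 < 1 + (exp (- d0) - 1) * exp (- wd * (s - t0)).
Proof.
  intros Hs. assert (exp (- wd * (s - t0)) <= 1) by (rewrite <- exp_0; apply exp_le_exp; nra).
  generalize (exp_pos (- wd * (s - t0))) (exp_pos (- d0)). intros.
  destruct (Rle_or_lt 0 (exp (- d0) - 1)); nra.
Qed.

Lemma d_sol_start : d_sol wd t0 d0 t0 = d0.
Proof.
  unfold d_sol. rewrite Rminus_diag, Rmult_0_r, exp_0, Rmult_1_r.
  replace (1 + (exp (- d0) - 1)) with (exp (- d0)) by ring. rewrite ln_exp. ring.
Qed.

Lemma exp_d_sol s : t0 <= s -> exp (d_sol wd t0 d0 s) = / (1 + (exp (- d0) - 1) * exp (- wd * (s - t0))).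
Proof. intros Hs. unfold d_sol. rewrite exp_Ropp, exp_ln by now apply d_sol_arg_pos. reflexivity. Qed.

Lemma exp_d_sol_le s : t0 <= s -> exp (d_sol wd t0 d0 s) <= 1 + exp d0.
Proof.
  intros Hs. rewrite exp_d_sol by exact Hs. assert (Hu := d_sol_arg_pos s Hs).
  set (e := exp (- wd * (s - t0))) in *.
  assert (e <= 1) by (unfold e; rewrite <- exp_0; apply exp_le_exp; nra).
  assert (0 < e) by apply exp_pos. assert (Hd := exp_mul_exp_opp d0).
  assert (0 < exp (- d0)) by apply exp_pos. assert (0 < exp d0) by apply exp_pos.
  destruct (Rle_or_lt 0 (exp (- d0) - 1)).
  - assert (/ (1 + (exp (- d0) - 1) * e) <= 1) by (rewrite <- Rinv_1; apply Rinv_le_contravar; nra). lra.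
  - assert (/ (1 + (exp (- d0) - 1) * e) <= / exp (- d0)) by (apply Rinv_le_contravar; nra).
    rewrite exp_Ropp, Rinv_inv in *. lra.
Qed.

Lemma d_sol_derive s : t0 <= s ->
  is_derive (d_sol wd t0 d0) s (- wd * (exp (d_sol wd t0 d0 s) - 1)).
Proof.
  intros Hs. rewrite exp_d_sol by exact Hs. assert (Hu := d_sol_arg_pos s Hs).
  unfold d_sol. unfold Rminus in *. auto_derive; [lra|]. field. lra.
Qed.

End DSolution.

Lemma d_solution_exists wd t0 d0 : 0 < wd -> exists D : R -> R,
  D t0 = d0 /\ (forall x, continuous D x) /\
  (forall t, t0 < t -> is_derive D t (- wd * (exp (D t) - 1))) /\
  (forall t, exp (D t) <= 1 + exp d0).
Proof.
  intros Hwd. exists (fun t => d_sol wd t0 d0 (Rmax t t0)). split; [|split; [|split]].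
  - rewrite Rmax_left by lra. apply d_sol_start.
  - intros x. apply continuous_comp_Rmax. eapply continuous_of_is_derive.
    apply d_sol_derive; [exact Hwd|apply Rmax_r].
  - intros t Ht. rewrite Rmax_left by lra.
    apply (is_derive_comp_Rmax (d_sol wd t0 d0)); [exact Ht|]. apply d_sol_derive; lra.
  - intros t. apply exp_d_sol_le; [exact Hwd|apply Rmax_r].
Qed.

Lemma CVN_R_of_factorial_bound (fn : nat -> R -> R) t0 M K : 0 <= M -> 0 <= K ->
  (forall n y, Rabs (fn n y) <= M * K ^ n * (Rmax y t0 - t0) ^ n / INR (fact n)) -> CVN_R fn.
Proof.
  intros HM HK Hb r.
  set (X := K * (r + Rabs t0)).
  assert (HX : 0 <= X) by (unfold X; generalize (Rabs_pos t0) (cond_pos r); nra).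
  destruct (exist_exp X) as [l Hl].
  exists (fun n => M * X ^ n / INR (fact n)), (M * l). split.
  - apply is_lim_seq_Reals. apply is_lim_seq_Reals in Hl.
    apply (is_lim_seq_ext (fun n => M * sum_f_R0 (fun i => / INR (fact i) * X ^ i) n)).
    + intros n. rewrite scal_sum. apply sum_eq. intros i _.
      assert (0 < INR (fact i)) by apply INR_fact_lt_0.
      rewrite Rabs_right; [field; lra|].
      apply Rle_ge, Rdiv_le_0_compat; [apply Rmult_le_pos; [lra|apply pow_le; lra]|lra].
    + apply (is_lim_seq_scal_l _ M l Hl).
  - intros n y Hy. apply (Rle_trans _ _ _ (Hb n y)).
    unfold Boule in Hy. rewrite Rminus_0_r in Hy.
    assert (0 < INR (fact n)) by apply INR_fact_lt_0.
    unfold Rdiv. apply Rmult_le_compat_r; [left; apply Rinv_0_lt_compat; lra|].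
    unfold X. rewrite Rpow_mult_distr, <- Rmult_assoc.
    apply Rmult_le_compat_l; [apply Rmult_le_pos; [lra|apply pow_le; lra]|].
    apply pow_incr. split; [generalize (Rmax_r y t0); lra|].
    generalize (Rabs_pos t0) (Rle_abs y) (Rle_abs (- t0)) (cond_pos r). rewrite Rabs_Ropp. intros.
    unfold Rmax. destruct (Rle_dec y t0); lra.
Qed.

Lemma SP_continuous (fn : nat -> R -> R) : (forall n x, continuous (fn n) x) ->
  forall n x, continuous (SP fn n) x.
Proof.
  intros Hc n. induction n as [|n IH]; intros x; [apply Hc|].
  apply (continuous_Rplus (SP fn n) (fn (S n))); auto.
Qed.

Lemma SFL_continuous (fn : nat -> R -> R) (C : CVN_R fn) :
  (forall n x, continuous (fn n) x) -> forall x, continuous (SFL fn (CVN_R_CVS fn C)) x.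
Proof.
  intros Hc x. apply continuity_pt_filterlim.
  assert (Hr : 0 < Rabs x + 1) by (generalize (Rabs_pos x); lra).
  apply (CVU_continuity (SP fn) _ 0 (mkposreal _ Hr)); [now apply CVN_CVU|..].
  - intros n y _. apply continuity_pt_filterlim. now apply SP_continuous.
  - unfold Boule; simpl. rewrite Rminus_0_r. lra.
Qed.

Lemma SFL_Un_cv (fn : nat -> R -> R) cv x : Un_cv (fun N => SP fn N x) (SFL fn cv x).
Proof. unfold SFL. destruct (cv x) as [l Hl]. exact Hl. Qed.

Lemma CVU_linear_combination fa fb ga gb c d (al be : R -> R) A B :
  CVU fa ga c d -> CVU fb gb c d -> 0 <= A -> 0 <= B ->
  (forall y, Rabs (al y) <= A) -> (forall y, Rabs (be y) <= B) ->
  CVU (fun n y => al y * fa n y + be y * fb n y) (fun y => al y * ga y + be y * gb y) c d.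
Proof.
  intros Ha Hb HA HB Hal Hbe eps He.
  set (e' := eps / (A + B + 1)).
  assert (He' : 0 < e') by (unfold e'; apply Rdiv_lt_0_compat; lra).
  destruct (Ha e' He') as [N1 H1]. destruct (Hb e' He') as [N2 H2].
  exists (max N1 N2). intros n y Hn Hy.
  specialize (H1 n y ltac:(lia) Hy). specialize (H2 n y ltac:(lia) Hy).
  replace (al y * ga y + be y * gb y - (al y * fa n y + be y * fb n y))
    with (al y * (ga y - fa n y) + be y * (gb y - fb n y)) by ring.
  apply (Rle_lt_trans _ _ _ (Rabs_triang _ _)). rewrite !Rabs_mult.
  assert (Rabs (al y) * Rabs (ga y - fa n y) <= A * e') by (apply Rmult_le_compat; auto using Rabs_pos; lra).
  assert (Rabs (be y) * Rabs (gb y - fb n y) <= B * e') by (apply Rmult_le_compat; auto using Rabs_pos; lra).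
  assert (A * e' + B * e' < eps).
  { replace (A * e' + B * e') with (eps - e') by (unfold e'; field; lra). lra. }
  lra.
Qed.

Lemma is_derive_SFL_linear (f1 f2 : nat -> R -> R) (C1 : CVN_R f1) (C2 : CVN_R f2)
    (al be : R -> R) A B t (d : posreal) :
  0 <= A -> 0 <= B -> (forall y, Rabs (al y) <= A) -> (forall y, Rabs (be y) <= B) ->
  (forall n y, Boule t d y ->
     is_derive (SP f1 (S n)) y (al y * SP f1 n y + be y * SP f2 n y)) ->
  is_derive (SFL f1 (CVN_R_CVS f1 C1)) t
    (al t * SFL f1 (CVN_R_CVS f1 C1) t + be t * SFL f2 (CVN_R_CVS f2 C2) t).
Proof.
  intros HA HB Hal Hbe Hd.
  assert (Hr : 0 < Rabs t + d) by (generalize (Rabs_pos t) (cond_pos d); lra).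
  assert (Hsub : forall f G, CVU (SP f) G 0 (mkposreal _ Hr) -> CVU (SP f) G t d).
  { intros f G HU eps He. destruct (HU eps He) as [N HN]. exists N. intros n y Hn Hy. apply HN; [exact Hn|].
    unfold Boule in *; simpl. rewrite Rminus_0_r.
    generalize (Rabs_triang (y - t) t). replace (y - t + t) with y by ring. lra. }
  apply is_derive_Reals.
  apply (CVU_derivable (fun n => SP f1 (S n)) (fun n y => al y * SP f1 n y + be y * SP f2 n y)
           _ (fun y => al y * SFL f1 (CVN_R_CVS f1 C1) y + be y * SFL f2 (CVN_R_CVS f2 C2) y) t d).
  - apply (CVU_linear_combination _ _ _ _ _ _ al be A B); auto; apply Hsub, CVN_CVU; auto.
  - intros y _. apply is_lim_seq_Reals.
    apply (is_lim_seq_incr_1 (fun n => SP f1 n y)). apply is_lim_seq_Reals, SFL_Un_cv.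
  - intros n y Hy. apply is_derive_Reals, Hd, Hy.
  - unfold Boule. rewrite Rminus_diag, Rabs_R0. apply cond_pos.
Qed.

Lemma continuous_RInt_Rmax (F : R -> R) t0 x : (forall x, continuous F x) ->
  continuous (fun t => RInt F t0 (Rmax t t0)) x.
Proof.
  intros HF. apply (continuous_comp_Rmax (fun b => RInt F t0 b)).
  eapply continuous_of_is_derive. now apply is_derive_RInt_upper.
Qed.

Lemma is_derive_RInt_Rmax (F : R -> R) t0 t : (forall x, continuous F x) -> t0 < t ->
  is_derive (fun s => RInt F t0 (Rmax s t0)) t (F t).
Proof.
  intros HF Ht. apply (is_derive_comp_Rmax (fun b => RInt F t0 b)); [exact Ht|].
  now apply is_derive_RInt_upper.
Qed.

Lemma continuous_lincomb (f g : R -> R) (al be : R -> R) :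
  (forall x, continuous al x) -> (forall x, continuous be x) ->
  (forall x, continuous f x) -> (forall x, continuous g x) ->
  forall x, continuous (fun s => al s * f s + be s * g s) x.
Proof. intros; apply continuous_Rplus; apply continuous_Rmult; auto. Qed.

Lemma is_derive_SP_S (fn : nat -> R -> R) N y l l' :
  is_derive (SP fn N) y l -> is_derive (fn (S N)) y l' -> is_derive (SP fn (S N)) y (l + l').
Proof. intros D1 D2. apply (is_derive_plus (SP fn N) (fn (S N))); assumption. Qed.

Section LinearSystem.
Variables (t0 z10 z20 K : R) (a11 a12 a21 a22 : R -> R).
Hypotheses (C11 : forall x, continuous a11 x) (C12 : forall x, continuous a12 x)
           (C21 : forall x, continuous a21 x) (C22 : forall x, continuous a22 x).
Hypotheses (B11 : forall x, Rabs (a11 x) <= K) (B12 : forall x, Rabs (a12 x) <= K)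
           (B21 : forall x, Rabs (a21 x) <= K) (B22 : forall x, Rabs (a22 x) <= K).

(* Increments of the Picard iteration for [(p, q)' = A (p, q)] on [[t0, +oo)]; the solution is their
   sum.  Before [t0] they are frozen at their value at [t0]. *)
Fixpoint picard (n : nat) : (R -> R) * (R -> R) :=
  match n with
  | O => (fun _ => z10, fun _ => z20)
  | S m =>
      (fun t => RInt (fun s => a11 s * fst (picard m) s + a12 s * snd (picard m) s) t0 (Rmax t t0),
       fun t => RInt (fun s => a21 s * fst (picard m) s + a22 s * snd (picard m) s) t0 (Rmax t t0))
  end.

Lemma picard_continuous n :
  (forall x, continuous (fst (picard n)) x) /\ (forall x, continuous (snd (picard n)) x).
Proof.
  induction n as [|n [IH1 IH2]]; [split; intros; apply continuous_const|].
  cbn [picard fst snd].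
  split; intros x;
    [apply (continuous_RInt_Rmax (fun s => a11 s * fst (picard n) s + a12 s * snd (picard n) s))
    |apply (continuous_RInt_Rmax (fun s => a21 s * fst (picard n) s + a22 s * snd (picard n) s))];
    apply continuous_lincomb; assumption.
Qed.

Lemma picard_derive n t : t0 < t ->
  is_derive (fst (picard (S n))) t (a11 t * fst (picard n) t + a12 t * snd (picard n) t) /\
  is_derive (snd (picard (S n))) t (a21 t * fst (picard n) t + a22 t * snd (picard n) t).
Proof.
  intros Ht. destruct (picard_continuous n) as [C1 C2]. cbn [picard fst snd].
  split; [apply (is_derive_RInt_Rmax (fun s => a11 s * fst (picard n) s + a12 s * snd (picard n) s))
         |apply (is_derive_RInt_Rmax (fun s => a21 s * fst (picard n) s + a22 s * snd (picard n) s))];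
    try exact Ht; apply continuous_lincomb; assumption.
Qed.

Lemma picard_before_start n t : t <= t0 -> fst (picard (S n)) t = 0 /\ snd (picard (S n)) t = 0.
Proof.
  intros Ht. simpl. rewrite Rmax_right by exact Ht.
  split; apply (RInt_point (V:=R_CompleteNormedModule)).
Qed.

Lemma picard_bound n t :
  Rabs (fst (picard n) t) + Rabs (snd (picard n) t) <=
    (Rabs z10 + Rabs z20) * (2 * K) ^ n * (Rmax t t0 - t0) ^ n / INR (fact n).
Proof.
  assert (HK : 0 <= K) by (generalize (Rabs_pos (a11 0)) (B11 0); lra).
  assert (HM : 0 <= Rabs z10 + Rabs z20) by (generalize (Rabs_pos z10) (Rabs_pos z20); lra).
  induction n as [|n IH] in t |- *; [simpl; lra|].
  destruct (Rle_or_lt t t0) as [Ht|Ht].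
  { destruct (picard_before_start n t Ht) as [E1 E2]. rewrite E1, E2, Rabs_R0, Rmax_right, Rminus_diag, pow_i by (lia || lra).
    unfold Rdiv. rewrite Rmult_0_r, Rmult_0_l. lra. }
  set (C := (Rabs z10 + Rabs z20) * (2 * K) ^ n / INR (fact n)).
  assert (HC : 0 <= C) by (apply Rdiv_le_0_compat; [apply Rmult_le_pos; [lra|apply pow_le; lra]|apply INR_fact_lt_0]).
  assert (HIH : forall s, t0 < s -> Rabs (fst (picard n) s) + Rabs (snd (picard n) s) <= C * (s - t0) ^ n).
  { intros s Hs. generalize (IH s). rewrite Rmax_left by lra. unfold C, Rdiv. lra. }
  assert (Hcomp : forall al be : R -> R, (forall x, continuous al x) -> (forall x, continuous be x) ->
            (forall x, Rabs (al x) <= K) -> (forall x, Rabs (be x) <= K) ->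
            Rabs (RInt (fun s => al s * fst (picard n) s + be s * snd (picard n) s) t0 t) <=
              K * C * (t - t0) ^ S n / INR (S n)).
  { intros al be Cal Cbe Bal Bbe. destruct (picard_continuous n) as [C1 C2].
    apply abs_RInt_le_pow_shift; [apply continuous_lincomb; auto|lra|].
    intros s [Hs _]. specialize (HIH s Hs).
    apply (Rle_trans _ _ _ (Rabs_triang _ _)). rewrite !Rabs_mult.
    generalize (Rabs_pos (fst (picard n) s)) (Rabs_pos (snd (picard n) s)) (Bal s) (Bbe s). intros.
    assert (Rabs (al s) * Rabs (fst (picard n) s) <= K * Rabs (fst (picard n) s)) by (apply Rmult_le_compat_r; lra).
    assert (Rabs (be s) * Rabs (snd (picard n) s) <= K * Rabs (snd (picard n) s)) by (apply Rmult_le_compat_r; lra).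
    rewrite Rmult_assoc. assert (K * (Rabs (fst (picard n) s) + Rabs (snd (picard n) s)) <= K * (C * (s - t0) ^ n))
      by (apply Rmult_le_compat_l; lra). lra. }
  cbn [picard fst snd]. rewrite Rmax_left by lra.
  generalize (Hcomp a11 a12 C11 C12 B11 B12) (Hcomp a21 a22 C21 C22 B21 B22). intros.
  replace ((Rabs z10 + Rabs z20) * (2 * K) ^ S n * (t - t0) ^ S n / INR (fact (S n)))
    with (2 * (K * C * (t - t0) ^ S n / INR (S n))).
  - lra.
  - assert (INR (S n) <> 0) by (apply not_0_INR; lia). assert (0 < INR (fact n)) by apply INR_fact_lt_0.
    rewrite fact_simpl, mult_INR. unfold C. simpl pow. field. lra.
Qed.

Let p_terms (n : nat) : R -> R := fst (picard n).
Let q_terms (n : nat) : R -> R := snd (picard n).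

Lemma SP_picard_start N : SP p_terms N t0 = z10 /\ SP q_terms N t0 = z20.
Proof.
  induction N as [|N [IH1 IH2]]; [split; reflexivity|].
  destruct (picard_before_start N t0 (Rle_refl t0)) as [E1 E2].
  unfold SP in *; simpl. unfold p_terms, q_terms in *. rewrite IH1, IH2, E1, E2. split; ring.
Qed.

Lemma SP_picard_derive N y : t0 < y ->
  is_derive (SP p_terms (S N)) y (a11 y * SP p_terms N y + a12 y * SP q_terms N y) /\
  is_derive (SP q_terms (S N)) y (a21 y * SP p_terms N y + a22 y * SP q_terms N y).
Proof.
  intros Hy. induction N as [|N [IH1 IH2]].
  - destruct (picard_derive 0 y Hy) as [D1 D2].
    assert (Dp : is_derive (SP p_terms 0) y 0)
      by (apply (is_derive_ext (fun _ => z10)); [intros; reflexivity|exact (is_derive_const z10 y)]).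
    assert (Dq : is_derive (SP q_terms 0) y 0)
      by (apply (is_derive_ext (fun _ => z20)); [intros; reflexivity|exact (is_derive_const z20 y)]).
    split; (eapply is_derive_eq; [apply is_derive_SP_S; eassumption|]);
      unfold SP, p_terms, q_terms; simpl; ring.
  - destruct (picard_derive (S N) y Hy) as [D1 D2].
    split; (eapply is_derive_eq; [apply is_derive_SP_S; eassumption|]);
      unfold SP, p_terms, q_terms; simpl; ring.
Qed.

Lemma CVN_R_picard_p : CVN_R p_terms.
Proof.
  assert (HK : 0 <= 2 * K) by (generalize (Rabs_pos (a11 0)) (B11 0); lra).
  apply (CVN_R_of_factorial_bound _ t0 (Rabs z10 + Rabs z20) (2 * K));
    [generalize (Rabs_pos z10) (Rabs_pos z20); lra|exact HK|].
  intros n y. generalize (picard_bound n y) (Rabs_pos (q_terms n y)). unfold p_terms, q_terms. lra.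
Qed.

Lemma CVN_R_picard_q : CVN_R q_terms.
Proof.
  assert (HK : 0 <= 2 * K) by (generalize (Rabs_pos (a11 0)) (B11 0); lra).
  apply (CVN_R_of_factorial_bound _ t0 (Rabs z10 + Rabs z20) (2 * K));
    [generalize (Rabs_pos z10) (Rabs_pos z20); lra|exact HK|].
  intros n y. generalize (picard_bound n y) (Rabs_pos (p_terms n y)). unfold p_terms, q_terms. lra.
Qed.

Theorem linear_system_solution : exists p q : R -> R,
  (forall x, continuous p x) /\ (forall x, continuous q x) /\ p t0 = z10 /\ q t0 = z20 /\
  forall t, t0 < t -> is_derive p t (a11 t * p t + a12 t * q t) /\ is_derive q t (a21 t * p t + a22 t * q t).
Proof.
  set (p := SFL p_terms (CVN_R_CVS _ CVN_R_picard_p)). set (q := SFL q_terms (CVN_R_CVS _ CVN_R_picard_q)).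
  assert (HK : 0 <= K) by (generalize (Rabs_pos (a11 0)) (B11 0); lra).
  exists p, q. split; [|split; [|split; [|split]]].
  - apply SFL_continuous. intros n x. apply (picard_continuous n).
  - apply SFL_continuous. intros n x. apply (picard_continuous n).
  - apply (UL_sequence (fun N => SP p_terms N t0)); [apply SFL_Un_cv|].
    apply is_lim_seq_Reals, (is_lim_seq_ext (fun _ => z10)); [|apply is_lim_seq_const].
    intros N. symmetry. apply SP_picard_start.
  - apply (UL_sequence (fun N => SP q_terms N t0)); [apply SFL_Un_cv|].
    apply is_lim_seq_Reals, (is_lim_seq_ext (fun _ => z20)); [|apply is_lim_seq_const].
    intros N. symmetry. apply SP_picard_start.
  - intros t Ht. assert (Hd : 0 < t - t0) by lra.
    assert (Hball : forall y, Boule t (mkposreal _ Hd) y -> t0 < y)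
      by (intros y Hy; unfold Boule in Hy; simpl in Hy; apply Rabs_lt_between in Hy; lra).
    split.
    + apply (is_derive_SFL_linear _ _ CVN_R_picard_p CVN_R_picard_q a11 a12 K K t (mkposreal _ Hd)); auto.
      intros n y Hy. apply (proj1 (SP_picard_derive n y (Hball y Hy))).
    + eapply is_derive_eq; [apply (is_derive_SFL_linear _ _ CVN_R_picard_q CVN_R_picard_p a22 a21 K K t (mkposreal _ Hd)); auto|unfold p, q; ring].
      intros n y Hy. eapply is_derive_eq; [apply (proj2 (SP_picard_derive n y (Hball y Hy)))|ring].
Qed.

End LinearSystem.

(* Variation of constants. *)
Lemma scalar_linear_solution k t0 r0 (Q : R -> R) : (forall x, continuous Q x) ->
  exists r : R -> R, r t0 = r0 /\ forall t, is_derive r t (- k * r t + Q t).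
Proof.
  intros HQ. set (F := fun s => exp (k * (s - t0)) * Q s).
  assert (HF : forall x, continuous F x).
  { intros x. apply continuous_Rmult; [|apply HQ].
    eapply continuous_of_is_derive. auto_derive; [auto|reflexivity]. }
  exists (fun t => exp (- k * (t - t0)) * (r0 + RInt F t0 t)). split.
  - rewrite Rminus_diag, Rmult_0_r, exp_0, (RInt_point (V:=R_CompleteNormedModule)).
    unfold zero; simpl. ring.
  - intros t. assert (DI := is_derive_RInt_upper F t0 t HF).
    eapply is_derive_eq.
    + apply (is_derive_mult (fun t => exp (- k * (t - t0))) (fun t => r0 + RInt F t0 t));
        [auto_derive; auto|apply (is_derive_plus (fun _ => r0) (fun t => RInt F t0 t)); [apply is_derive_const|exact DI]|].
      intros; apply Rmult_comm.
    + unfold F, mult, plus, zero; simpl.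
      assert (He := exp_mul_exp_opp (k * (t - t0))).
      set (E := exp (k * (t - t0))) in *. set (E' := exp (- (k * (t - t0)))) in *.
      replace (exp (- k * (t + - t0))) with E' by (unfold E'; f_equal; ring).
      assert (E' * (E * Q t) = Q t) by (rewrite <- Rmult_assoc, (Rmult_comm E' E), He; ring).
      replace (exp (- k * (t - t0))) with E' by (unfold E'; f_equal; ring).
      match goal with |- ?l = ?r => change (@eq R l r) end. lra.
Qed.

Lemma solution_exists w0 a wd h H t0 r0 z10 z20 d0 : 0 < wd ->
  exists x, is_solution w0 a wd h H t0 x /\
    tr x t0 = r0 /\ tz1 x t0 = z10 /\ tz2 x t0 = z20 /\ td x t0 = d0.
Proof.
  intros Hwd. destruct (d_solution_exists wd t0 d0 Hwd) as [D [ED [DC [DD DB]]]].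
  set (B := fun t => - (a / 2) * exp (D t)).
  assert (BC : forall x, continuous B x)
    by (intros x; apply continuous_Rmult; [apply continuous_const|apply continuous_exp_comp, DC]).
  set (K := Rabs w0 + Rabs (a / 2) * (1 + exp d0)).
  assert (HK : forall c, Rabs c <= Rabs w0 -> Rabs c <= K).
  { intros c Hc. assert (0 <= Rabs (a / 2) * (1 + exp d0))
      by (apply Rmult_le_pos; [apply Rabs_pos|generalize (exp_pos d0); lra]).
    unfold K. lra. }
  assert (BB : forall x, Rabs (B x) <= K).
  { intros x. unfold B, K. rewrite Rabs_mult, Rabs_Ropp, (Rabs_pos_eq (exp (D x))) by (left; apply exp_pos).
    specialize (DB x).
    assert (Rabs (a / 2) * exp (D x) <= Rabs (a / 2) * (1 + exp d0)) by (apply Rmult_le_compat_l; [apply Rabs_pos|lra]).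
    generalize (Rabs_pos w0). lra. }
  destruct (linear_system_solution t0 z10 z20 K (fun _ => 0) (fun _ => w0) (fun _ => - w0) B)
    as [Z1 [Z2 [CZ1 [CZ2 [EZ1 [EZ2 DZ]]]]]];
    try (intros; apply continuous_const); try exact BC; try exact BB;
    try (intros; apply HK; rewrite ?Rabs_R0, ?Rabs_Ropp; first [apply Rabs_pos|lra]).
  set (Q := fun s => H * (- (a / 2) * exp (D s) * Z2 s ^ 2)).
  assert (QC : forall x, continuous Q x).
  { intros x. unfold Q. apply continuous_Rmult; [apply continuous_const|].
    apply continuous_Rmult; [apply continuous_Rmult; [apply continuous_const|apply continuous_exp_comp, DC]|].
    apply continuous_Rmult; [apply CZ2|apply continuous_Rmult; [apply CZ2|apply continuous_const]]. }
  destruct (scalar_linear_solution h t0 r0 Q QC) as [Rf [ER DR]].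
  exists (mktraj Rf Z1 Z2 D). unfold is_solution. cbn [tr tz1 tz2 td].
  split; [split; [|split; [|split; [|split]]]|split; [|split; [|split]]]; try assumption.
  - intros t Ht. destruct (DZ t Ht) as [D1 D2]. split; [|split; [|split]].
    + apply (is_derive_eq _ _ _ _ (DR t)). unfold f_r, qform, Q. ring.
    + apply (is_derive_eq _ _ _ _ D1). unfold f_z1. ring.
    + apply (is_derive_eq _ _ _ _ D2). unfold f_z2, B. ring.
    + exact (DD t Ht).
  - apply filterlim_at_right_of_continuous. eapply continuous_of_is_derive. apply DR.
  - now apply filterlim_at_right_of_continuous.
  - now apply filterlim_at_right_of_continuous.
  - now apply filterlim_at_right_of_continuous.
Qed.

Theorem mainTheorem5 (w0 a wd h H : R) :
  0 < w0 -> 0 < a -> 0 < wd -> 0 < h -> 0 < H ->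
  GUAS w0 a wd h H.
Proof.
  intros Hw0 Ha Hwd Hh HH. split; [|split; [|split]].
  - intros t0 r0 z10 z20 d0 _. now apply solution_exists.
  - now apply uniform_stability.
  - now apply uniform_boundedness.
  - now apply uniform_attractivity.
Qed.
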